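(* Let $\gamma\in(1,2]$, $\delta>0$, $L>0$. Assume that $f$ is convex and $L$-smooth relative to $d$ on $Q$, that $V$ satisfies the triangular scaling property with scaling factor $\gamma$, and that for every $y\in Q$ the pair $(f_\delta(y),\nabla f_\delta(y))$ is a $(\delta,L)$-oracle of $f$ at $y$. Then the sequences $\{\theta_k\},\{x_k\},\{z_k\}$ generated by Algorithm AccBPGM-1 satisfy, for every $k\ge0$ and every $x\in Q$, $$\frac{1}{\theta_k^{\gamma}}\big(f(x_{k+1})-f(x)\big)+LV(x,z_{k+1})\le\frac{1-\theta_k}{\theta_k^{\gamma}}\big(f(x_k)-f(x)\big)+LV(x,z_k)+\frac{\delta}{\theta_k^{\gamma}}.$$
   Context: Setting. $\mathbb{E}$ is a finite-dimensional real vector space with a norm $\|\cdot\|$ and dual space $\mathbb{E}^*$; $\langle g,x\rangle$ denotes the value of $g\in\mathbb{E}^*$ at $x\in\mathbb{E}$. $Q\subset\mathbb{E}$ is a closed convex set. $f:Q\to\mathbb{R}$ is convex and differentiable on an open set containing the relative interior $\mathrm{rint}\,Q$. The prox-function $d:Q\to\mathbb{R}$ is continuously differentiable and $1$-strongly convex with respect to $\|\cdot\|$. The Bregman divergence is $V(x,y)=d(x)-d(y)-\langle\nabla d(y),x-y\rangle$. All minimization subproblems appearing in the algorithms are assumed to have minimizers. Relative smoothness: $f$ is $L$-smooth relative to $d$ on $Q$ if $f(y)\le f(x)+\langle\nabla f(x),y-x\rangle+LV(y,x)$ for all $x\in\mathrm{rint}\,Q$, $y\in Q$. Triangular scaling property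 with factor $\gamma>0$: $V((1-\theta)x+\theta z,(1-\theta)x+\theta\tilde z)\le\theta^{\gamma}V(z,\tilde z)$ for all $x,z,\tilde z\in Q$ and all $\theta\in[0,1]$. $(\delta,L)$-oracle: a pair $(f_\delta(y),\nabla f_\delta(y))\in\mathbb{R}\times\mathbb{E}^*$ is a $(\delta,L)$-oracle of $f$ at $y$ if $0\le f(x)-\big(f_\delta(y)+\langle\nabla f_\delta(y),x-y\rangle\big)\le LV(x,y)+\delta$ for all $x\in Q$. Notation: $g(x|y):=f_\delta(y)+\langle\nabla f_\delta(y),x-y\rangle$. Algorithm AccBPGM-1. Input: $x_0\in\mathrm{rint}\,Q$, $\gamma\in(1,2]$, $\delta>0$, $L>0$. Set $z_0=x_0$, $\theta_0=1$. For $k=0,1,2,\dots$: $y_k=(1-\theta_k)x_k+\theta_kz_k$; $z_{k+1}=\arg\min_{z\in Q}\{g(z|y_k)+\theta_k^{\gamma-1}LV(z,z_k)\}$; $x_{k+1}=(1-\theta_k)x_k+\theta_kz_{k+1}$; choose $\theta_{k+1}\in(0,1]$ with $\frac{1-\theta_{k+1}}{\theta_{k+1}^{\gamma}}\le\frac{1}{\theta_k^{\gamma}}$. *)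

(* E = 'rV[R]_n (finite-dimensional
   real vector space), equipped with an arbitrary norm [nrm]; the dual space
   E^* is represented by linear functionals {linear E -> R}. *)
From HB Require Import structures.
From mathcomp Require Import all_boot all_order all_algebra.
From mathcomp Require Import all_classical all_reals all_analysis.
Set Implicit Arguments. Unset Strict Implicit. Unset Printing Implicit Defensive.
Import Order.TTheory GRing.Theory Num.Theory.
Import numFieldNormedType.Exports.
Local Open Scope classical_set_scope.
Local Open Scope ring_scope.

Section Defs.
Variables (R : realType) (n : nat).
Local Notation E := 'rV[R]_n.

Definition is_norm (nrm : E -> R) : Prop :=
  [/\ forall x, nrm x = 0 -> x = 0,
      forall (a : R) x, nrm (a *: x) = `|a| * nrm x
    & forall x y, nrm (x + y) <= nrm x + nrm y].

Definition is_convex_set (Q : set E) : Prop :=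
  forall x y (t : R), Q x -> Q y -> 0 <= t <= 1 -> Q ((1 - t) *: x + t *: y).

Definition convex_on (Q : set E) (f : E -> R) : Prop :=
  forall x y (t : R), Q x -> Q y -> 0 <= t <= 1 ->
    f ((1 - t) *: x + t *: y) <= (1 - t) * f x + t * f y.

Definition strongly_convex_on (mu : R) (nrm : E -> R) (Q : set E) (f : E -> R) : Prop :=
  forall x y (t : R), Q x -> Q y -> 0 <= t <= 1 ->
    f ((1 - t) *: x + t *: y) <=
      (1 - t) * f x + t * f y - mu / 2 * t * (1 - t) * nrm (x - y) ^+ 2.

Definition affine_hull (Q : set E) : set E :=
  [set x | exists (m : nat) (q : 'I_m -> E) (l : 'I_m -> R),
     [/\ forall i, Q (q i), \sum_i l i = 1 & x = \sum_i l i *: q i]].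

Definition rint (Q : set E) : set E :=
  [set x | Q x /\ exists2 e : R, 0 < e & ball x e `&` affine_hull Q `<=` Q].

Definition Bregman (d : E -> R) (x y : E) : R :=
  d x - d y - ('d d y : {linear E -> R}) (x - y).

Definition rel_smooth (L : R) (d f : E -> R) (Q : set E) : Prop :=
  forall x y, rint Q x -> Q y ->
    f y <= f x + ('d f x : {linear E -> R}) (y - x) + L * Bregman d y x.

Definition triangular_scaling (gam : R) (d : E -> R) (Q : set E) : Prop :=
  forall x z zt (t : R), Q x -> Q z -> Q zt -> 0 <= t <= 1 ->
    Bregman d ((1 - t) *: x + t *: z) ((1 - t) *: x + t *: zt)
      <= t `^ gam * Bregman d z zt.

Definition is_oracle (delta L : R) (d f : E -> R) (Q : set E)
    (y : E) (fy : R) (gy : {linear E -> R}) : Prop :=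
  forall x, Q x ->
    0 <= f x - (fy + gy (x - y)) <= L * Bregman d x y + delta.

End Defs.

From HB Require Import structures.
From mathcomp Require Import all_boot all_order all_algebra.
From mathcomp Require Import all_classical all_reals all_analysis.
From mathcomp Require Import ring lra.
Set Implicit Arguments. Unset Strict Implicit.
Import Order.TTheory GRing.Theory Num.Theory.
Import numFieldNormedType.Exports.
Local Open Scope classical_set_scope.
Local Open Scope ring_scope.

(* The oracle's upper bound at x_{k+1} costs
   L V(x_{k+1}, y_k), which triangular scaling bounds by theta^gam L V(z_{k+1}, z_k),
   since x_{k+1} and y_k are the same convex combination with z_k replaced by z_{k+1}.
   The Bregman three-point inequality for the proximal step defining z_{k+1} (a
   consequence of its first-order optimality, obtained here from one-sided difference
   quotients of d) trades that term and the linear model at z_{k+1} for the model at x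
   and L V(x, z_k) - L V(x, z_{k+1}); the oracle's lower bounds at x_k and x close the
   estimate, which is then divided by theta^gam. *)

Lemma le_diff_of_le_increment (R : realType) (V : normedModType R) (d : V -> R)
    (z v : V) (a : R) :
  differentiable d z ->
  (forall t, 0 < t <= 1 -> t * a <= d (z + t *: v) - d z) ->
  a <= ('d d z : {linear V -> R}) v.
Proof.
move=> dz incr; rewrite -deriveE //.
set q := fun h : R => h^-1 *: ((d \o shift z) (h *: v) - d z).
have q_right : q @ 0^'+ --> 'D_v d z.
  have dv : derivable d z v by exact: diff_derivable.
  have q_lim : q @ 0^' --> 'D_v d z := dv.
  apply: cvg_trans q_lim => P /= [e e0 He].
  by exists e => // t /= ? t0; apply: He => //; rewrite gt_eqF.
rewrite -(cvg_lim _ q_right) //; apply: limr_ge; first exact: (cvgP _ q_right).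
near=> t.
have t0 : 0 < t by near: t; exact: nbhs_right_gt.
have t1 : t <= 1.
  by near: t; exists 1 => //= s; rewrite /ball /= sub0r normrN => /ltr_normlW ? ?; lra.
rewrite /q /= ler_pdivlMl // (addrC (t *: v)); apply: incr; rewrite t0 t1.
Unshelve. all: by end_near.
Qed.

Section BregmanProx.
Variables (R : realType) (n : nat) (d : 'rV[R]_n -> R).
Local Notation E := 'rV[R]_n.
Local Notation D x := ('d d x : {linear E -> R}).

(* The differentials are generalized before any linear/ring rewriting: left in place,
   their bodies get unfolded during matching and the tactics do not terminate. *)
Lemma Bregman_three_point (u z' z : E) :
  Bregman d u z = Bregman d u z' + Bregman d z' z + (D z' (u - z') - D z (u - z')).
Proof.
have e : u - z = (u - z') + (z' - z) by rewrite addrA subrK.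
rewrite /Bregman e; move: (D z) (D z') => Dz Dz'.
by rewrite linearD /=; ring.
Qed.

Variables (Q : set E) (g : {linear E -> R}) (c : R) (z z' : E).
Hypotheses (convQ : is_convex_set Q) (Qz' : Q z') (dz' : differentiable d z')
  (c_gt0 : 0 < c)
  (z'_min : forall w, Q w -> g z' + c * Bregman d z' z <= g w + c * Bregman d w z).

Lemma prox_first_order (u : E) : Q u ->
  0 <= g (u - z') + c * (D z' (u - z') - D z (u - z')).
Proof.
move=> Qu; set v := u - z'.
suff : D z v - g v / c <= D z' v.
  move: (D z) (D z') => Dz Dz' h.
  have := ler_wpM2l (ltW c_gt0) h.
  rewrite mulrBr mulrCA mulfV ?gt_eqF // mulr1 => h'; lra.
apply: le_diff_of_le_increment => // t /andP[t0 t1].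
have Qw : Q (z' + t *: v).
  have e : z' + t *: v = (1 - t) *: z' + t *: u.
    by rewrite /v scalerBr scalerBl scale1r addrA addrAC.
  by rewrite e; apply: convQ => //; rewrite t1 ltW.
have := z'_min Qw; rewrite /Bregman.
have e : z' + t *: v - z = (z' - z) + t *: v by rewrite addrAC.
clearbody v; rewrite e; move: (D z) => Dz.
have eDz : Dz ((z' - z) + t *: v) = Dz (z' - z) + t * Dz v by rewrite linearD linearZ.
have eg : g (z' + t *: v) = g z' + t * g v by rewrite linearD linearZ.
rewrite eDz eg.
move: (Dz v) (Dz (z' - z)) (g v) (g z') (d (z' + t *: v)) (d z') (d z) => A B G gz W Z dz h.
rewrite -(ler_pM2l c_gt0).
have -> : c * (t * (A - G / c)) = t * c * A - t * G by field; rewrite gt_eqF.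
nra.
Qed.

Lemma prox_three_point (u : E) : Q u ->
  g z' + c * Bregman d z' z + c * Bregman d u z' <= g u + c * Bregman d u z.
Proof.
move=> Qu; have := prox_first_order Qu.
rewrite (@Bregman_three_point u z' z) [g (u - z')]linearB /=.
move: (D z' (u - z') - D z (u - z')) (g u) (g z') => e gu gz' h.
nra.
Qed.

End BregmanProx.

Lemma accbpgm_step (R : realType) (n : nat) (Q : set 'rV[R]_n) (f d : 'rV[R]_n -> R)
    (gam delta L th fy : R) (g : {linear 'rV[R]_n -> R}) (x y z z' x' u : 'rV[R]_n) :
  is_convex_set Q -> Q x -> Q z -> Q z' -> Q u -> differentiable d z' ->
  0 < L -> 0 < th <= 1 ->
  triangular_scaling gam d Q -> is_oracle delta L d f Q y fy g ->
  y = (1 - th) *: x + th *: z ->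
  (forall w, Q w -> fy + g (z' - y) + th `^ (gam - 1) * L * Bregman d z' z
                 <= fy + g (w - y) + th `^ (gam - 1) * L * Bregman d w z) ->
  x' = (1 - th) *: x + th *: z' ->
  f x' - f u + th `^ gam * L * Bregman d u z'
    <= (1 - th) * (f x - f u) + th `^ gam * L * Bregman d u z + delta.
Proof.
move=> convQ Qx Qz Qz' Qu dz' L_gt0 /andP[th_gt0 th_le1] scaling oracle ey z'_min ex'.
have Qx' : Q x' by rewrite ex'; apply: convQ => //; rewrite th_le1 ltW.
have th_ge0 : 0 <= th by exact: ltW.
set P := th `^ gam; set c := th `^ (gam - 1) * L.
have c_gt0 : 0 < c by rewrite mulr_gt0 // powR_gt0.
have thc : th * c = P * L.
  have powR_succ : th `^ (gam - 1) * th `^ 1 = P.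
    by rewrite -powRD ?subrK // (gt_eqF th_gt0) implybT.
  by rewrite /c mulrA (mulrC th) -{2}(powRr1 th_ge0) powR_succ.
have three : g z' + c * Bregman d z' z + c * Bregman d u z' <= g u + c * Bregman d u z.
  apply: (prox_three_point convQ Qz' dz' c_gt0) => // w Qw.
  by have := z'_min w Qw; rewrite !linearB /= -/c; lra.
have scale : Bregman d x' y <= P * Bregman d z' z.
  by rewrite ex' ey; apply: scaling => //; rewrite th_ge0 th_le1.
clearbody P c.
have gx' : g x' = (1 - th) * g x + th * g z' by rewrite ex' linearD !linearZ.
have /andP[_ upper] := oracle x' Qx'.
have /andP[lower_x _] := oracle x Qx.
have /andP[lower_u _] := oracle u Qu.
rewrite subr_ge0 linearB /= in lower_x; rewrite subr_ge0 linearB /= in lower_u.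
rewrite linearB /= gx' in upper.
move: three scale upper.
move: (Bregman d z' z) (Bregman d u z') (Bregman d u z) (Bregman d x' y).
move=> Vz'z Vuz' Vuz Vx'y three scale upper.
have thcV V : th * (c * V) = P * L * V by rewrite mulrA thc.
have := ler_wpM2l th_ge0 three; rewrite !mulrDr !thcV => three_th.
have := ler_wpM2l (ltW L_gt0) scale; rewrite mulrA (mulrC L) => scale_L.
have th'_ge0 : 0 <= 1 - th by rewrite subr_ge0.
have lower_x_th' := ler_wpM2l th'_ge0 lower_x.
have lower_u_th := ler_wpM2l th_ge0 lower_u.
(* upper + scale_L + (1 - th) * lower_x + th * lower_u + th * three *)
lra.
Qed.

Theorem lemma5 (R : realType) (n : nat)
  (nrm : 'rV[R]_n -> R) (Q : set 'rV[R]_n) (f d : 'rV[R]_n -> R)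
  (fdel : 'rV[R]_n -> R) (gdel : 'rV[R]_n -> {linear 'rV[R]_n -> R})
  (gam delta L : R)
  (theta : nat -> R) (x y z : nat -> 'rV[R]_n) :
  is_norm nrm -> closed Q -> is_convex_set Q ->
  convex_on Q f ->
  (exists2 U : set 'rV[R]_n, open U /\ rint Q `<=` U &
     forall u, U u -> differentiable f u) ->
  (forall u, Q u -> differentiable d u) ->
  (forall v, {within Q, continuous (fun u => ('d d u : {linear 'rV[R]_n -> R}) v)}) ->
  strongly_convex_on 1 nrm Q d ->
  1 < gam <= 2 -> 0 < delta -> 0 < L ->
  rel_smooth L d f Q ->
  triangular_scaling gam d Q ->
  (forall u, Q u -> is_oracle delta L d f Q u (fdel u) (gdel u)) ->
  rint Q (x 0%N) -> z 0%N = x 0%N -> theta 0%N = 1 ->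
  (forall k, y k = (1 - theta k) *: x k + theta k *: z k) ->
  (forall k, Q (z k.+1) /\
     forall u, Q u ->
       fdel (y k) + gdel (y k) (z k.+1 - y k)
         + theta k `^ (gam - 1) * L * Bregman d (z k.+1) (z k)
       <= fdel (y k) + gdel (y k) (u - y k)
         + theta k `^ (gam - 1) * L * Bregman d u (z k)) ->
  (forall k, x k.+1 = (1 - theta k) *: x k + theta k *: z k.+1) ->
  (forall k, 0 < theta k.+1 <= 1 /\
     (1 - theta k.+1) / theta k.+1 `^ gam <= 1 / theta k `^ gam) ->
  forall k (u : 'rV[R]_n), Q u ->
    1 / theta k `^ gam * (f (x k.+1) - f u) + L * Bregman d u (z k.+1)
    <= (1 - theta k) / theta k `^ gam * (f (x k) - f u)
       + L * Bregman d u (z k) + delta / theta k `^ gam.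
Proof.
move=> _ _ convQ _ _ dd _ _ _ _ L_gt0 _ scaling oracle Qx0 ez0 th0 hy hz hx hth k u Qu.
have th_range j : 0 < theta j <= 1.
  by case: j => [|j]; [rewrite th0 ltr01 lexx | case: (hth j)].
have Qcomb a b j : Q a -> Q b -> Q ((1 - theta j) *: a + theta j *: b).
  by move=> Qa Qb; case/andP: (th_range j) => th_gt0 th_le1; apply: convQ; rewrite // th_le1 ltW.
have Qz j : Q (z j) by case: j => [|j]; [rewrite ez0; exact: Qx0.1 | exact: (hz j).1].
have Qx j : Q (x j) by elim: j => [|j IH]; [exact: Qx0.1 | rewrite hx; exact: Qcomb].
have Qy : Q (y k) by rewrite hy; exact: Qcomb.
have := accbpgm_step convQ (Qx k) (Qz k) (Qz k.+1) Qu (dd _ (Qz k.+1)) L_gt0 (th_range k)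
  scaling (oracle _ Qy) (hy k) (hz k).2 (hx k).
have : 0 < theta k `^ gam by case/andP: (th_range k) => th_gt0 _; exact: powR_gt0.
move: (theta k `^ gam) => P P_gt0.
move: (theta k) (f (x k.+1)) (f (x k)) (f u) => th fx' fx fu.
move: (Bregman d u (z k.+1)) (Bregman d u (z k)) => V' V step.
rewrite -subr_ge0.
have -> : (1 - th) / P * (fx - fu) + L * V + delta / P - (1 / P * (fx' - fu) + L * V')
    = ((1 - th) * (fx - fu) + P * L * V + delta - (fx' - fu + P * L * V')) / P.
  by field; rewrite gt_eqF.
by rewrite divr_ge0 ?subr_ge0 // ltW.
Qed.
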